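(* For the RHA process and all $n\ge0$, $j\ge1$, $$H(X^n_j)\le\min_{0\le l\le n}\Big(H(\mathcal G_{\le l})+2^{n-l}\log k_l\Big),$$ where $H(\mathcal G_{\le0})=0$.
   Context: Random hierarchical association (RHA) process. Fix positive integers $(k_n)_{n\ge0}$ (perplexities) with $k_{n-1}\le k_n\le k_{n-1}^2$ for all $n\ge1$. On a probability space $(\Omega,\mathcal J,P)$ let, for each $n\ge1$, $(L_{nj},R_{nj})_{j=1}^{k_n}$ be the lexicographically sorted enumeration of a uniformly random $k_n$-element subset of $\{1,\dots,k_{n-1}\}^2$ (each of the $\binom{k_{n-1}^2}{k_n}$ subsets equally likely), independently over $n$. Let $(C_n)_{n\ge0}$ be independent, independent of all $(L_{nj},R_{nj})$, with $C_n$ uniform on $\{1,\dots,k_n\}$. Define strings $Y^0_j=j$ (length 1) for $1\le j\le k_0$ and $Y^n_j=Y^{n-1}_{L_{nj}}Y^{n-1}_{R_{nj}}$ (concatenation). The RHA process is $\mathcal X=Y^0_{C_0}Y^1_{C_1}Y^2_{C_2}\cdots=X_1X_2X_3\cdots$, $X_{k:l}=X_k\cdots X_l$; for $n\ge0$, $j\ge1$, $X^n_j=X_{j2^n:(j+1)2^n-1}$. $\mathcal G_{\le n}=(L_{lj},R_{lj})_{1\le l\le n,\,1\le j\le k_l}$ ($\mathcal G_{\le0}$ trivial). $H(X)=\mathbb E_P[-\log P(X)]$ with natural logarithm. *)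

From HB Require Import structures.
From mathcomp Require Import all_boot.
From Stdlib Require Import Reals.

Set Implicit Arguments.
Unset Strict Implicit.
Unset Printing Implicit Defensive.

(* Conventions:
   - all indices are 0-based internally: the symbol/index i in 'I_(k l)
     stands for i+1 in {1,...,k_l};
   - the probability space is the finite product of the first M levels:
     graph levels 1..M and choices C_0..C_M, with the uniform (= product of
     uniforms) measure; M is any level large enough for the block considered. *)

(* the random k_{l+1}-subset of {1..k_l}^2 chosen at level l+1 *)
Definition Gset (k : nat -> nat) (l : nat) : finType :=
  {A : {set ('I_(k l) * 'I_(k l))} | #|A| == k l.+1}.

Definition Omega (k : nat -> nat) (M : nat) : finType :=
  ({dffun forall l : 'I_M, Gset k l} * {dffun forall l : 'I_M.+1, 'I_(k l)})%type.

Definition lexle (p q : nat * nat) : bool :=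
  (p.1 < q.1) || ((p.1 == q.1) && (p.2 <= q.2)).

(* (L_{l+1,j}, R_{l+1,j})_j : lexicographically sorted enumeration of the
   subset chosen at level l+1 (0-based entries) *)
Definition edges k M (w : Omega k M) (l : nat) : seq (nat * nat) :=
  match (insub l : option 'I_M) with
  | Some i => sort lexle [seq ((val p.1 : nat), (val p.2 : nat)) | p <- enum (val (w.1 i))]
  | None => [::]
  end.

(* Y^n_{j+1} (strings over {1..k_0}) *)
Fixpoint Y k M (w : Omega k M) (n j : nat) : seq nat :=
  match n with
  | 0 => [:: j.+1]
  | n'.+1 => let e := nth (0, 0) (edges w n') j in Y w n' e.1 ++ Y w n' e.2
  end.

Definition Cv k M (w : Omega k M) (l : nat) : nat :=
  match (insub l : option 'I_M.+1) with
  | Some i => val (w.2 i)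
  | None => 0
  end.

(* Y^0_{C_0} Y^1_{C_1} ... Y^M_{C_M} : the prefix X_1 ... X_{2^{M+1}-1} *)
Definition Xpre k M (w : Omega k M) : seq nat :=
  flatten [seq Y w l (Cv w l) | l <- iota 0 M.+1].

(* X^n_j = X_{j 2^n : (j+1) 2^n - 1}  (X_1 is at list index 0) *)
Definition Xblock k M (n j : nat) (w : Omega k M) : seq nat :=
  take (2 ^ n) (drop (j * 2 ^ n).-1 (Xpre w)).

(* G_{<= l} = (L_{ij},R_{ij})_{1<=i<=l, j} *)
Definition Gle k M (l : nat) (w : Omega k M) : seq (seq (nat * nat)) :=
  [seq edges w i | i <- iota 0 l].

Definition prob {Om : finType} {T : eqType} (f : Om -> T) (t : T) : R :=
  (INR #|[pred w | f w == t]| / INR #|Om|)%R.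

Definition entropy {Om : finType} {T : eqType} (f : Om -> T) : R :=
  (- foldr Rplus 0 [seq prob f t * ln (prob f t) | t <- undup [seq f w | w <- enum Om]])%R.

(* Every string Y^m_c with m >= l is a concatenation of level-l
   strings Y^l_c', and the prefix Y^0_{C_0} ... Y^(l-1)_{C_(l-1)} has length
   2^l - 1, so the block X^n_j is the concatenation of 2^(n-l) strings Y^l_c,
   c < k_l.  As c |-> Y^l_c is a function of G_{<=l}, on each fiber of G_{<=l}
   the block takes at most k_l^(2^(n-l)) values, and a variable taking at most
   N values on each fiber of g has entropy at most H(g) + ln N. *)

From HB Require Import structures.
From mathcomp Require Import all_boot zify.
From Stdlib Require Import Reals Lra.

Set Implicit Arguments.
Unset Strict Implicit.

HB.instance Definition _ := Monoid.isComLaw.Build R 0%R Rplus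
  (fun x y z => esym (Rplus_assoc x y z)) Rplus_comm Rplus_0_l.

Lemma iter_Rplus n (c : R) : iter n (Rplus c) 0%R = (INR n * c)%R.
Proof.
elim: n => [|n IHn]; first by rewrite /=; lra.
by rewrite iterS IHn S_INR; lra.
Qed.

Lemma ler_rsum (I : Type) (r : seq I) (P : pred I) (F G : I -> R) :
  (forall i, P i -> (F i <= G i)%R) ->
  (\big[Rplus/0%R]_(i <- r | P i) F i <= \big[Rplus/0%R]_(i <- r | P i) G i)%R.
Proof.
move=> leFG; apply: (big_ind2 (fun x y => x <= y)%R) => //; first lra.
by move=> *; lra.
Qed.

Lemma rsum_mulr (I : Type) (r : seq I) (P : pred I) (F : I -> R) c :
  (\big[Rplus/0%R]_(i <- r | P i) (F i * c)
   = (\big[Rplus/0%R]_(i <- r | P i) F i) * c)%R.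
Proof.
elim: r => [|x r IHr]; first by rewrite !big_nil; lra.
by rewrite !big_cons; case: (P x); rewrite IHr; lra.
Qed.

Lemma rsumN (I : Type) (r : seq I) (P : pred I) (F : I -> R) :
  (\big[Rplus/0%R]_(i <- r | P i) (- F i) = - \big[Rplus/0%R]_(i <- r | P i) F i)%R.
Proof.
elim: r => [|x r IHr]; first by rewrite !big_nil; lra.
by rewrite !big_cons; case: (P x); rewrite IHr; lra.
Qed.

Lemma rsum_card (T : finType) (P : pred T) c :
  \big[Rplus/0%R]_(x | P x) c = (INR #|[pred x | P x]| * c)%R.
Proof.
by rewrite (eq_bigl (fun x => x \in [pred x | P x])) // big_const iter_Rplus.
Qed.

Lemma rsum_const (T : finType) c : \big[Rplus/0%R]_(x : T) c = (INR #|T| * c)%R.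
Proof. by rewrite rsum_card; congr (INR _ * _)%R; apply: eq_card. Qed.

Lemma rsum_partition (T : finType) (U : eqType) (f : T -> U) (A : pred T)
    (r : seq U) (F : T -> R) :
  uniq r -> (forall x, A x -> f x \in r) ->
  \big[Rplus/0%R]_(x | A x) F x =
  \big[Rplus/0%R]_(u <- r) \big[Rplus/0%R]_(x | A x && (f x == u)) F x.
Proof.
move=> r_uniq r_cover.
rewrite (exchange_big_dep A) /=; last by move=> u x _ /andP[].
apply: eq_bigr => x Ax.
rewrite (big_rem (f x)) ?r_cover //= eqxx Ax.
rewrite big_seq_cond big1 ?Rplus_0_r // => u /andP[u_in /andP[_ /eqP fx_u]].
by rewrite -fx_u mem_rem_uniqF in u_in.
Qed.

Lemma INR_mulV_le1 c : (INR c * / INR c <= 1)%R.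
Proof.
have [->|c_gt0] := posnP c; first by rewrite Rmult_0_l; lra.
by rewrite Rinv_r; [lra | apply: not_0_INR; lia].
Qed.

Lemma ln_le x y : (0 < x)%R -> (x <= y)%R -> (ln x <= ln y)%R.
Proof. by move=> x_gt0 [/(ln_increasing _ _ x_gt0)|->]; lra. Qed.

Lemma ln_le_sub1 x : (0 < x)%R -> (ln x <= x - 1)%R.
Proof. by move=> x_gt0; have := exp_ineq1_le (ln x); rewrite exp_ln //; lra. Qed.

Lemma ln_div x y : (0 < x)%R -> (0 < y)%R -> ln (x / y) = (ln x - ln y)%R.
Proof. by move=> x_gt0 y_gt0; rewrite ln_mult ?ln_Rinv //; apply: Rinv_0_lt_compat. Qed.

Lemma ln_INR_ge0 N : (0 < N)%N -> (0 <= ln (INR N))%R.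
Proof.
move=> N_gt0; rewrite -ln_1; apply: ln_le; first lra.
by rewrite -[1%R]/(INR 1); apply: le_INR; apply/leP.
Qed.

Section FiberEntropy.
Variable Om : finType.

Definition fiber_size {T : eqType} (f : Om -> T) (w : Om) : R :=
  INR #|[pred x | f x == f w]|.

Lemma fiber_size_gt0 {T : eqType} (f : Om -> T) w : (0 < fiber_size f w)%R.
Proof. by apply: lt_0_INR; apply/ltP/card_gt0P; exists w; rewrite inE /=. Qed.

Lemma entropy_average {T : eqType} (f : Om -> T) :
  entropy f = (- (\big[Rplus/0%R]_w ln (prob f (f w))) / INR #|Om|)%R.
Proof.
rewrite /entropy foldrE big_map.
rewrite (@rsum_partition _ _ f predT (undup [seq f w | w <- enum Om]))
  ?undup_uniq //; last by move=> w _; rewrite mem_undup map_f ?mem_enum.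
rewrite /Rdiv -Ropp_mult_distr_l -rsum_mulr; congr (- _)%R.
apply: eq_bigr => t _.
rewrite (eq_bigr (fun _ => ln (prob f t))); last by move=> w /eqP ->.
rewrite rsum_card /prob (eq_card (B := [pred w | f w == t])) //.
by rewrite /Rdiv; ring.
Qed.

Variables (T U : eqType) (f : Om -> T) (g : Om -> U) (N : nat).
Hypothesis N_gt0 : (0 < N)%N.
Hypothesis fiber_values : forall w0, exists S : seq T,
  (size S <= N)%N /\ forall w, g w = g w0 -> f w \in S.

(* Summing the inverse joint fiber sizes over a fiber of g counts the values
   of f on that fiber. *)
Lemma rsum_inv_joint_fiber_le w0 :
  (\big[Rplus/0%R]_(w | g w == g w0) / fiber_size (fun x => (f x, g x)) w
   <= INR N)%R.
Proof.
have [S [size_S S_fiber]] := fiber_values w0.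
rewrite (@rsum_partition _ _ f [pred w | g w == g w0] (undup S)) ?undup_uniq //;
  last by move=> w /eqP /S_fiber; rewrite mem_undup.
apply: (@Rle_trans _ (\big[Rplus/0%R]_(s <- undup S) 1%R)).
  apply: ler_rsum => s _.
  rewrite (eq_bigr (fun _ => / INR #|[pred x | (f x, g x) == (s, g w0)]|)%R);
    last by move=> w /andP[/eqP gw /eqP fw]; rewrite /fiber_size fw gw.
  rewrite rsum_card; apply: Rle_trans (INR_mulV_le1 _); right.
  by congr (INR _ * / INR _)%R; apply: eq_card => x; rewrite !inE xpair_eqE andbC.
rewrite big_const_seq count_predT iter_Rplus Rmult_1_r.
by apply: le_INR; apply/leP; apply: leq_trans size_S; apply: size_undup.
Qed.

Lemma rsum_fiber_ratio_le :
  (\big[Rplus/0%R]_w (fiber_size g w / fiber_size (fun x => (f x, g x)) w)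
   <= INR N * INR #|Om|)%R.
Proof.
pose cfg w := fiber_size (fun x => (f x, g x)) w.
rewrite (eq_bigr (fun w => \big[Rplus/0%R]_w' (if g w' == g w then / cfg w else 0)))%R;
  last by move=> w _; rewrite -big_mkcond rsum_card.
rewrite exchange_big Rmult_comm -rsum_const; apply: ler_rsum => w' _.
apply: Rle_trans (rsum_inv_joint_fiber_le w'); right.
by rewrite [RHS]big_mkcond; apply: eq_bigr => w _; rewrite eq_sym.
Qed.

Lemma log_prob_ratio_le w :
  (- ln (prob f (f w)) + ln (prob g (g w)) - ln (INR N)
   <= fiber_size g w / fiber_size (fun x => (f x, g x)) w * / INR N - 1)%R.
Proof.
have n_gt0 : (0 < INR #|Om|)%R by apply: lt_0_INR; apply/ltP/card_gt0P; exists w.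
have N_pos : (0 < INR N)%R by apply: lt_0_INR; apply/ltP.
have cf_gt0 := fiber_size_gt0 f w; have cg_gt0 := fiber_size_gt0 g w.
have cfg_gt0 := fiber_size_gt0 (fun x => (f x, g x)) w.
have le_cfg_cf : (ln (fiber_size (fun x => (f x, g x)) w) <= ln (fiber_size f w))%R.
  apply: ln_le => //; apply: le_INR; apply/leP/subset_leq_card.
  by apply/subsetP => x; rewrite !inE xpair_eqE => /andP[].
have div_gt0 : (0 < fiber_size g w / fiber_size (fun x => (f x, g x)) w)%R.
  exact: Rdiv_lt_0_compat.
have invN_gt0 : (0 < / INR N)%R by apply: Rinv_0_lt_compat.
have := ln_le_sub1 (Rmult_lt_0_compat _ _ div_gt0 invN_gt0).
rewrite ln_mult ?ln_Rinv ?ln_div //.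
rewrite -[INR #|[pred x | f x == f w]|]/(fiber_size f w).
by rewrite -[INR #|[pred x | g x == g w]|]/(fiber_size g w); lra.
Qed.

Lemma entropy_le_fiberwise : (entropy f <= entropy g + ln (INR N))%R.
Proof.
have lnN_ge0 := ln_INR_ge0 N_gt0.
rewrite !entropy_average.
have [Om0|Om_gt0] := posnP #|Om|.
  rewrite !big_pred0 => [|w|w]; try by have := card0_eq Om0 w.
  by rewrite Ropp_0 /Rdiv !Rmult_0_l; lra.
set n := INR #|Om|.
have n_gt0 : (0 < n)%R by apply: lt_0_INR; apply/ltP.
have N_pos : (0 < INR N)%R by apply: lt_0_INR; apply/ltP.
have := @ler_rsum _ (index_enum Om) predT _ _ (fun w _ => log_prob_ratio_le w).
rewrite /Rminus !big_split /= !rsumN !rsum_const rsum_mulr -/n.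
have : (\big[Rplus/0%R]_w (fiber_size g w / fiber_size (fun x => (f x, g x)) w)
        * / INR N <= n)%R.
  apply: (Rle_trans _ (INR N * n * / INR N)); last by right; field; lra.
  apply: Rmult_le_compat_r; first by left; apply: Rinv_0_lt_compat.
  exact: rsum_fiber_ratio_le.
set A := \big[Rplus/0%R]_w ln (prob f (f w)).
set B := \big[Rplus/0%R]_w ln (prob g (g w)).
move=> ratio_le sum_le.
apply: (Rmult_le_reg_r n) => //.
rewrite /Rdiv Rmult_plus_distr_r !Rmult_assoc Rinv_l; lra.
Qed.

End FiberEntropy.

Lemma natpowE a b : Nat.pow a b = expn a b.
Proof. by elim: b => [|b IHb] //=; rewrite IHb expnS. Qed.

Lemma take_flatten_constsize (T : Type) p a (ss : seq (seq T)) :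
  all (fun s => size s == p) ss -> take (a * p) (flatten ss) = flatten (take a ss).
Proof.
elim: ss a => [|s ss IHss] [|a] //= /andP[/eqP size_s ss_size]; first by rewrite take0.
by rewrite take_cat size_s mulSn ltnNge leq_addr /= addKn IHss.
Qed.

Lemma drop_flatten_constsize (T : Type) p a (ss : seq (seq T)) :
  all (fun s => size s == p) ss -> drop (a * p) (flatten ss) = flatten (drop a ss).
Proof.
elim: ss a => [|s ss IHss] [|a] //= /andP[/eqP size_s ss_size]; first by rewrite drop0.
by rewrite drop_cat size_s mulSn ltnNge leq_addr /= addKn IHss.
Qed.

Lemma take_drop_blocks (T : Type) p (pre : seq T) (ss : seq (seq T)) a b :
  size pre = p.-1 -> all (fun s => size s == p) ss ->
  take (b * p) (drop (p.-1 + a * p) (pre ++ flatten ss))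
  = flatten (take b (drop a ss)).
Proof.
move=> size_pre ss_size.
rewrite addnC -drop_drop drop_size_cat // drop_flatten_constsize //.
rewrite take_flatten_constsize //.
by move: ss_size; rewrite -{1}(cat_take_drop a ss) all_cat => /andP[].
Qed.

Section LevelStrings.
Variables (k : nat -> nat) (M : nat).
Hypothesis k_gt0 : forall n, (0 < k n)%N.

Lemma nth_edges_lt (w : Omega k M) m i :
  ((nth (0,0) (edges w m) i).1 < k m)%N && ((nth (0,0) (edges w m) i).2 < k m)%N.
Proof.
rewrite /edges; case: insubP => [i0 _ <-|_]; last by rewrite nth_nil /= k_gt0.
set L := sort _ _.
have [i_lt|i_ge] := ltnP i (size L); last by rewrite nth_default //= k_gt0.
have : nth (0,0) L i \in L by apply: mem_nth.
by rewrite mem_sort => /mapP [p _ ->] /=; rewrite !ltn_ord.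
Qed.

Lemma Cv_lt (w : Omega k M) m : (Cv w m < k m)%N.
Proof. by rewrite /Cv; case: insubP => [i0 _ <-|_] //; apply: ltn_ord. Qed.

Lemma size_Y (w : Omega k M) m i : size (Y w m i) = expn 2 m.
Proof.
elim: m i => [|m IHm] i //.
by rewrite [LHS]/= size_cat !IHm expnS mul2n addnn.
Qed.

Lemma Y_eq_of_Gle (w w' : Omega k M) l m i :
  Gle l w = Gle l w' -> (m <= l)%N -> Y w m i = Y w' m i.
Proof.
move=> eq_G; elim: m i => [|m IHm] i m_le //=.
have -> : edges w m = edges w' m.
  have := congr1 (fun s => nth [::] s m) eq_G.
  by rewrite /Gle !(nth_map 0) ?size_iota ?nth_iota.
by rewrite !IHm // ltnW.
Qed.

Lemma Y_addn_flatten (w : Omega k M) l d c : (c < k (l + d))%N ->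
  exists s, [/\ size s = expn 2 d, all (fun x => x < k l)%N s &
     Y w (l + d) c = flatten (map (Y w l) s)].
Proof.
elim: d c => [|d IHd] c c_lt.
  by exists [:: c]; rewrite addn0 in c_lt *; rewrite /= c_lt cats0.
have /andP [lt1 lt2] := nth_edges_lt w (l + d) c.
have [s1 [size1 all1 eq1]] := IHd _ lt1.
have [s2 [size2 all2 eq2]] := IHd _ lt2.
exists (s1 ++ s2); split.
- by rewrite size_cat size1 size2 expnS mul2n addnn.
- by rewrite all_cat all1 all2.
- by rewrite addnS /= eq1 eq2 map_cat flatten_cat.
Qed.

Definition Xseg (w : Omega k M) (a b : nat) : seq nat :=
  flatten [seq Y w m (Cv w m) | m <- iota a b].

Lemma Xseg_addn (w : Omega k M) a b c :
  Xseg w a (b + c) = Xseg w a b ++ Xseg w (a + b) c.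
Proof. by rewrite /Xseg iotaD map_cat flatten_cat. Qed.

Lemma size_Xseg0 (w : Omega k M) l : size (Xseg w 0 l) = (expn 2 l).-1.
Proof.
elim: l => [|l IHl] //.
rewrite -addn1 Xseg_addn size_cat IHl /Xseg /= cats0 size_Y add0n expnD expn1.
by have := expn_gt0 2 l; lia.
Qed.

Lemma Xseg_flatten (w : Omega k M) l K : exists S,
  [/\ size S = (expn 2 K).-1, all (fun x => x < k l)%N S &
      Xseg w l K = flatten (map (Y w l) S)].
Proof.
elim: K => [|K [S [size_S all_S eq_S]]]; first by exists [::].
have [s [size_s all_s eq_s]] := Y_addn_flatten w (Cv_lt w (l + K)).
exists (S ++ s); split.
- by rewrite size_cat size_S size_s expnS; have := expn_gt0 2 K; lia.
- by rewrite all_cat all_S all_s.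
- by rewrite -addn1 Xseg_addn eq_S /Xseg /= cats0 eq_s map_cat flatten_cat.
Qed.

Variables (n j l : nat).
Hypotheses (j_gt0 : (0 < j)%N) (l_le_n : (l <= n)%N)
  (block_in_range : (j.+1 * expn 2 n <= expn 2 M.+1)%N).

Lemma Xblock_flatten (w : Omega k M) :
  exists s, [/\ size s = expn 2 (n - l), all (fun x => x < k l)%N s &
     Xblock n j w = flatten (map (Y w l) s)].
Proof.
have n_lt : (n < M.+1)%N.
  rewrite -(@leq_exp2l 2) //; apply: leq_trans block_in_range.
  by rewrite expnS leq_mul2r ltnS j_gt0 orbT.
have l_le : (l <= M.+1)%N by apply: leq_trans (ltnW n_lt).
have [S [size_S all_S eq_S]] := Xseg_flatten w l (M.+1 - l).
set x := expn 2 l; set y := expn 2 (n - l).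
have x_gt0 : (0 < x)%N by apply: expn_gt0.
have y_gt0 : (0 < y)%N by apply: expn_gt0.
have e2n : expn 2 n = y * x by rewrite /x /y -expnD subnK.
have e2M : expn 2 M.+1 = expn 2 (M.+1 - l) * x by rewrite /x -expnD subnK.
move: block_in_range; rewrite e2n e2M mulnA leq_mul2r eqn0Ngt x_gt0 /= => jy_le.
have start : (j * (y * x)).-1 = x.-1 + (j * y).-1 * x.
  have : (x <= j * y * x)%N by rewrite leq_pmull // muln_gt0 j_gt0.
  by rewrite mulnA -!subn1 mulnBl mul1n; lia.
exists (take y (drop (j * y).-1 S)); split.
- by rewrite size_takel // size_drop size_S; move: jy_le; rewrite mulSn; lia.
- by apply/allP => i /mem_take /mem_drop i_in; move/allP: all_S; apply.
rewrite /Xblock; change (Xpre w) with (Xseg w 0 M.+1).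
rewrite !natpowE e2n start -(subnKC l_le) Xseg_addn eq_S.
rewrite take_drop_blocks ?size_Xseg0 ?map_take ?map_drop //.
by apply/allP => s /mapP [i _ ->]; rewrite size_Y.
Qed.

Lemma Xblock_fiber_values (w0 : Omega k M) : exists S : seq (seq nat),
  (size S <= expn (k l) (expn 2 (n - l)))%N /\
  forall w : Omega k M, Gle l w = Gle l w0 -> Xblock n j w \in S.
Proof.
set y := expn 2 (n - l).
exists [seq flatten (map (Y w0 l) (map val (tval t))) | t <- enum {: y.-tuple 'I_(k l)}].
split; first by rewrite size_map -cardE card_tuple card_ord.
move=> w eq_G; have [s [size_s all_s ->]] := Xblock_flatten w.
have size_ord_s : size (map (fun x => Ordinal (ltn_pmod x (k_gt0 l))) s) == y.
  by rewrite size_map size_s.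
apply/mapP; exists (Tuple size_ord_s); first by rewrite mem_enum.
rewrite /= -!map_comp; congr flatten; apply/eq_in_map => x x_in /=.
rewrite modn_small; last by move/allP: all_s; apply.
exact: Y_eq_of_Gle eq_G (leqnn l).
Qed.

End LevelStrings.

Theorem proposition8 (k : nat -> nat)
  (hpos : forall n, (0 < k n)%N)
  (hk : forall n, (0 < n)%N -> (k n.-1 <= k n)%N && (k n <= k n.-1 ^ 2)%N)
  (n j M : nat) (hj : (0 < j)%N) (hM : (j.+1 * 2 ^ n <= 2 ^ M.+1)%N)
  (l : nat) (hl : (l <= n)%N) :
  (entropy (@Xblock k M n j)
     <= entropy (@Gle k M l) + pow 2 (n - l) * ln (INR (k l)))%R.
Proof.
rewrite !natpowE in hM.
have N_gt0 : (0 < expn (k l) (expn 2 (n - l)))%N by rewrite expn_gt0 hpos.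
apply: Rle_trans (entropy_le_fiberwise N_gt0 (Xblock_fiber_values hpos hj hl hM)) _.
apply: Rplus_le_compat_l; right.
rewrite -!natpowE !pow_INR ln_pow; last by apply: lt_0_INR; apply/ltP.
by rewrite pow_INR /=; congr (_ ^ _ * _)%R; lra.
Qed.
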